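(* For every instance of problem MR and every optimal schedule, the speed $s_{i,j}$ of every task $T_{i,j}$ with $v_{i,j}>0$ satisfies $$\frac{v_{i,j}}{t_{\max}}\le s_{i,j}\le\left(\frac{E}{v_{i,j}}\right)^{\frac{1}{\beta-1}},\qquad t_{\max}=\frac{w_{\max}}{w_{\min}}\left(n\,r_{\max}+n(n+1)\left(\frac{|\mathcal T|\cdot v_{\max}^{\beta}}{E}\right)^{\frac{1}{\beta-1}}\right).$$
   Context: Problem MR. There are jobs $\mathcal J=\{1,\dots,n\}$ and processors $\mathcal P=\{1,\dots,m\}$. Job $j$ has weight $w_j>0$, release date $r_j\ge0$, and a nonempty set of Map tasks and a nonempty set of Reduce tasks, preassigned to processors with at most one task of each job per processor; $T_{i,j}$ is the task of job $j$ on processor $i$, with work $v_{i,j}\ge0$; $\mathcal T$ is the set of all tasks and $|\mathcal T|$ its cardinality. A schedule gives each task a start time and a constant speed $s_{i,j}>0$; the task runs non-preemptively for $v_{i,j}/s_{i,j}$ time units and uses energy $v_{i,j}s_{i,j}^{\beta-1}$, where $\beta>1$ is a fixed constant. Feasibility: each processor runs at most one task at a time; tasks of job $j$ start no earlier than $r_j$; Reduce tasks of job $j$ start only after all Map tasks of job $j$ complete; total energy at most a given budget $E>0$. $C_j$ is the maximum completion time of the tasks of job $j$; the objective is to minimize $\sum_j w_jC_j$. $w_{\min}=\min_j w_j$, $w_{\max}=\max_j w_j$, $r_{\max}=\max_j r_j$, $v_{\max}=\max_{i,j}v_{i,j}$. *)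

From mathcomp Require Import all_boot all_order all_algebra.
From mathcomp Require Import all_classical all_reals all_analysis.
Set Implicit Arguments. Unset Strict Implicit. Unset Printing Implicit Defensive.
Import Order.TTheory GRing.Theory Num.Theory.
Local Open Scope ring_scope.

(* Instance of problem MR with n jobs ('I_n) and m processors ('I_m).
   kind i j = None          : job j has no task on processor i
   kind i j = Some true     : T_{i,j} is a Map task of job j
   kind i j = Some false    : T_{i,j} is a Reduce task of job j
   v i j : work of T_{i,j};  w j : weight;  r j : release date;
   beta : exponent of the energy model;  E : energy budget. *)

Definition is_task (n m : nat) (kind : 'I_m -> 'I_n -> option bool)
  (i : 'I_m) (j : 'I_n) : bool := kind i j != None.
Definition is_map (n m : nat) (kind : 'I_m -> 'I_n -> option bool)
  (i : 'I_m) (j : 'I_n) : bool := kind i j == Some true.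
Definition is_reduce (n m : nat) (kind : 'I_m -> 'I_n -> option bool)
  (i : 'I_m) (j : 'I_n) : bool := kind i j == Some false.

Definition valid_instance (R : realType) (n m : nat) (w r : 'I_n -> R)
  (kind : 'I_m -> 'I_n -> option bool) (v : 'I_m -> 'I_n -> R)
  (beta E : R) : Prop :=
  (forall j, 0 < w j) /\ (forall j, 0 <= r j) /\
  (forall j, exists i, is_map kind i j) /\
  (forall j, exists i, is_reduce kind i j) /\
  (forall i j, 0 <= v i j) /\ 1 < beta /\ 0 < E.

Definition dur (R : realType) (n m : nat) (v s : 'I_m -> 'I_n -> R)
  (i : 'I_m) (j : 'I_n) : R := v i j / s i j.

Definition energy (R : realType) (n m : nat) (kind : 'I_m -> 'I_n -> option bool)
  (v : 'I_m -> 'I_n -> R) (beta : R) (s : 'I_m -> 'I_n -> R) : R :=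
  \sum_(i < m) \sum_(j < n | is_task kind i j) v i j * s i j `^ (beta - 1).

Definition feasible (R : realType) (n m : nat) (r : 'I_n -> R)
  (kind : 'I_m -> 'I_n -> option bool) (v : 'I_m -> 'I_n -> R)
  (beta E : R) (st s : 'I_m -> 'I_n -> R) : Prop :=
  [/\ (forall i j, is_task kind i j -> 0 < s i j),
      (forall i j j', is_task kind i j -> is_task kind i j' -> j != j' ->
          st i j + dur v s i j <= st i j' \/ st i j' + dur v s i j' <= st i j),
      (forall i j, is_task kind i j -> r j <= st i j),
      (forall i i' j, is_reduce kind i j -> is_map kind i' j ->
          st i' j + dur v s i' j <= st i j)
    & energy kind v beta s <= E].

(* C_j : maximum completion time of the tasks of job j (the default 0 is
   harmless: every job has a task and completion times of feasible
   schedules are >= r_j >= 0). *)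
Definition completion (R : realType) (n m : nat)
  (kind : 'I_m -> 'I_n -> option bool) (v : 'I_m -> 'I_n -> R)
  (st s : 'I_m -> 'I_n -> R) (j : 'I_n) : R :=
  \big[Num.max/0]_(i < m | is_task kind i j) (st i j + dur v s i j).

Definition objective (R : realType) (n m : nat) (w : 'I_n -> R)
  (kind : 'I_m -> 'I_n -> option bool) (v : 'I_m -> 'I_n -> R)
  (st s : 'I_m -> 'I_n -> R) : R :=
  \sum_(j < n) w j * completion kind v st s j.

Definition optimal (R : realType) (n m : nat) (w r : 'I_n -> R)
  (kind : 'I_m -> 'I_n -> option bool) (v : 'I_m -> 'I_n -> R)
  (beta E : R) (st s : 'I_m -> 'I_n -> R) : Prop :=
  feasible r kind v beta E st s /\
  forall st' s', feasible r kind v beta E st' s' ->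
    objective w kind v st s <= objective w kind v st' s'.

Definition ntasks (n m : nat) (kind : 'I_m -> 'I_n -> option bool) : nat :=
  #|[set p : 'I_m * 'I_n | is_task kind p.1 p.2]|.

(* max over the jobs (values are >= 0 here, so default 0 is harmless) *)
Definition maxj (R : realType) (n : nat) (f : 'I_n -> R) : R :=
  \big[Num.max/0]_(j < n) f j.
(* min over the jobs; the default x0 is taken to be one of the values. *)
Definition minj (R : realType) (n : nat) (f : 'I_n -> R) (x0 : R) : R :=
  \big[Num.min/x0]_(j < n) f j.

Definition vmax (R : realType) (n m : nat) (kind : 'I_m -> 'I_n -> option bool)
  (v : 'I_m -> 'I_n -> R) : R :=
  \big[Num.max/0]_(p : 'I_m * 'I_n | is_task kind p.1 p.2) v p.1 p.2.

(* t_max, with w_min computed using default w j0 for some job j0 *)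
Definition tmax (R : realType) (n m : nat) (w r : 'I_n -> R)
  (kind : 'I_m -> 'I_n -> option bool) (v : 'I_m -> 'I_n -> R)
  (beta E : R) (j0 : 'I_n) : R :=
  (maxj w / minj w (w j0)) *
  (n%:R * maxj r +
   n%:R * (n%:R + 1) *
     ((ntasks kind)%:R * vmax kind v `^ beta / E) `^ (1 / (beta - 1))).

From mathcomp Require Import all_boot all_order all_algebra.
From mathcomp Require Import all_classical all_reals all_analysis.
From mathcomp Require Import ring lra.
Import Order.TTheory GRing.Theory Num.Theory.
Local Open Scope ring_scope.

(* The upper bound is immediate: a single task cannot use more than the whole
   budget E.  For the lower bound, compare an optimal schedule with a reference
   schedule in which job l owns the window [r_max + 2lD, r_max + (2l+2)D],
   its Map tasks running in the first half and its Reduce tasks in the second,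
   every task at the common speed v_max / D.  The window length D is chosen
   so that this schedule spends exactly E, so it is feasible and its objective
   is at most w_max (n r_max + n(n+1) D).  In the optimal schedule, the task
   T_{i,j} alone contributes at least w_min v_{i,j} / s_{i,j} to the
   objective, which gives the lower bound on s_{i,j}. *)

Lemma ler_term_sum {R : numDomainType} {I : finType} (P : pred I)
    (F : I -> R) (i : I) :
  (forall k, P k -> 0 <= F k) -> P i -> F i <= \sum_(k | P k) F k.
Proof.
move=> F_ge0 Pi; rewrite (bigD1 i) //= lerDl.
by apply: sumr_ge0 => k /andP[Pk _]; exact: F_ge0.
Qed.

Lemma sum_arith_windows (R : comPzRingType) (n : nat) (a b : R) :
  \sum_(l < n) (a + (2 * l%:R + 2) * b) = n%:R * a + n%:R * (n%:R + 1) * b.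
Proof.
elim: n => [|n IHn]; first by rewrite big_ord0 !mul0r addr0.
by rewrite big_ord_recr /= IHn -natr1; ring.
Qed.

Lemma powR_divr (R : realType) (a b x : R) :
  0 <= a -> 0 < b -> (a / b) `^ x = a `^ x / b `^ x.
Proof.
move=> a_ge0 b_gt0; have b_ge0 := ltW b_gt0.
by rewrite powRM ?invr_ge0 // -powR_inv1 // powRAC powR_inv1 // powR_ge0.
Qed.

Lemma ler_root_of_mul_powR (R : realType) (p x a b : R) :
  0 < p -> 0 <= x -> 0 < a -> a * x `^ p <= b -> x <= (b / a) `^ (1 / p).
Proof.
move=> p_gt0 x_ge0 a_gt0 axb.
have -> : x = (x `^ p) `^ (1 / p) by rewrite -powRrM div1r mulfV ?gt_eqF ?powRr1.
have b_ge0 : 0 <= b by apply: le_trans axb; rewrite mulr_ge0 ?powR_ge0 ?ltW.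
apply: ge0_ler_powR;
  rewrite ?nnegrE ?divr_ge0 ?powR_ge0 ?(ltW p_gt0) ?(ltW a_gt0) //.
by rewrite ler_pdivlMr // mulrC.
Qed.

Section Energy.
Context {R : realType} {n m : nat}.
Variables (kind : 'I_m -> 'I_n -> option bool) (v : 'I_m -> 'I_n -> R) (beta : R).

Lemma task_energy_le_energy (s : 'I_m -> 'I_n -> R) i j :
  (forall i j, 0 <= v i j) -> is_task kind i j ->
  v i j * s i j `^ (beta - 1) <= energy kind v beta s.
Proof.
move=> v_ge0 tij; have term_ge0 k l : 0 <= v k l * s k l `^ (beta - 1).
  by rewrite mulr_ge0 ?powR_ge0.
apply: le_trans (ler_term_sum xpredT _ i _ _) => //; last first.
  by move=> k _; apply: sumr_ge0.
exact: ler_term_sum.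
Qed.

Lemma energy_const_speed_le (s0 : R) :
  energy kind v beta (fun _ _ => s0)
    <= (ntasks kind)%:R * vmax kind v * s0 `^ (beta - 1).
Proof.
apply: le_trans (_ : \sum_(k < m) \sum_(l < n | is_task kind k l)
                        vmax kind v * s0 `^ (beta - 1) <= _).
  apply: ler_sum => k _; apply: ler_sum => l tkl; rewrite ler_wpM2r ?powR_ge0 //.
  exact: (le_bigmax_cond (j := (k, l)) 0 (fun p : 'I_m * 'I_n => v p.1 p.2)).
rewrite pair_big_dep /= -mulrA mulr_natl -sumr_const /ntasks.
by under [X in _ <= X]eq_bigl do rewrite inE.
Qed.

End Energy.

Lemma weighted_duration_le_objective {R : realType} {n m : nat}
    {w r : 'I_n -> R} {kind : 'I_m -> 'I_n -> option bool}
    {v : 'I_m -> 'I_n -> R} {beta E : R} {st s : 'I_m -> 'I_n -> R} {i j} :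
  (forall l, 0 <= w l) -> (forall l, 0 <= r l) ->
  feasible r kind v beta E st s -> is_task kind i j ->
  w j * dur v s i j <= objective w kind v st s.
Proof.
move=> w_ge0 r_ge0 [_ _ released _ _] tij.
have C_ge0 l : 0 <= completion kind v st s l by exact: bigmax_ge_id.
apply: le_trans (ler_term_sum xpredT _ j _ _) => //; last first.
  by move=> l _; rewrite mulr_ge0.
apply: ler_wpM2l => //.
apply: le_trans (le_bigmax_cond _ (fun k => st k j + dur v s k j) tij).
by rewrite lerDr (le_trans (r_ge0 j)) ?released.
Qed.

Section ReferenceSchedule.
Context {R : realType} {n m : nat} (r : 'I_n -> R).
Context {kind : 'I_m -> 'I_n -> option bool} {v : 'I_m -> 'I_n -> R}.
Context {beta E : R} {i0 : 'I_m} {j0 : 'I_n}.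
Hypotheses (beta_gt1 : 1 < beta) (E_gt0 : 0 < E).
Hypotheses (t0 : is_task kind i0 j0) (v0_gt0 : 0 < v i0 j0).

Definition ref_window : R :=
  ((ntasks kind)%:R * vmax kind v `^ beta / E) `^ (1 / (beta - 1)).
Definition ref_speed (_ : 'I_m) (_ : 'I_n) : R := vmax kind v / ref_window.
Definition ref_start (k : 'I_m) (l : 'I_n) : R :=
  maxj r + (2 * l%:R + (~~ is_map kind k l)%:R) * ref_window.

Let vmax_ge k l : is_task kind k l -> v k l <= vmax kind v.
Proof.
exact: (le_bigmax_cond (j := (k, l)) 0 (fun p : 'I_m * 'I_n => v p.1 p.2)).
Qed.

Let vmax_gt0 : 0 < vmax kind v.
Proof. exact: lt_le_trans v0_gt0 (vmax_ge _ _ t0). Qed.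

Let ntasks_gt0 : 0 < (ntasks kind)%:R :> R.
Proof. by rewrite ltr0n card_gt0; apply/set0Pn; exists (i0, j0); rewrite inE. Qed.

Let window_gt0 : 0 < ref_window.
Proof. by rewrite powR_gt0 // divr_gt0 // mulr_gt0 // powR_gt0. Qed.

Let ref_speed_gt0 k l : 0 < ref_speed k l.
Proof. exact: divr_gt0. Qed.

Lemma ref_speed_energy :
  (ntasks kind)%:R * vmax kind v * ref_speed i0 j0 `^ (beta - 1) = E.
Proof.
have window_pow : ref_window `^ (beta - 1)
    = (ntasks kind)%:R * vmax kind v `^ beta / E.
  rewrite -powRrM div1r mulVf ?subr_eq0 ?gt_eqF // powRr1 //.
  by rewrite divr_ge0 ?mulr_ge0 ?powR_ge0 ?(ltW E_gt0).
have beta_gt0 : 0 < beta by exact: lt_trans ltr01 beta_gt1.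
rewrite powR_divr ?ltW // window_pow -(mulr_powRB1 (ltW vmax_gt0) beta_gt0).
by field; rewrite !gt_eqF ?powR_gt0.
Qed.

Lemma ref_dur_le k l : is_task kind k l -> dur v ref_speed k l <= ref_window.
Proof.
by move=> tkl; rewrite /dur ler_pdivrMr // mulrC divfK ?gt_eqF // vmax_ge.
Qed.

Lemma ref_start_ge k (l : 'I_n) : maxj r + 2 * l%:R * ref_window <= ref_start k l.
Proof. by rewrite lerD2l ler_pM2r // lerDl. Qed.

Lemma ref_finish_le k (l : 'I_n) : is_task kind k l ->
  ref_start k l + dur v ref_speed k l <= maxj r + (2 * l%:R + 2) * ref_window.
Proof.
move=> /ref_dur_le dur_le; rewrite /ref_start.
have : (~~ is_map kind k l)%:R <= 1 :> R by case: (is_map kind k l).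
have := ltW window_gt0; nra.
Qed.

Lemma ref_jobs_disjoint k (l l' : 'I_n) : (l < l')%N -> is_task kind k l ->
  ref_start k l + dur v ref_speed k l <= ref_start k l'.
Proof.
move=> ltll' tkl; apply: le_trans (ref_finish_le _ _ tkl) _.
apply: le_trans (ref_start_ge k l').
have : l%:R + 1 <= l'%:R :> R by rewrite natr1 ler_nat.
have := ltW window_gt0; nra.
Qed.

Lemma ref_feasible : feasible r kind v beta E ref_start ref_speed.
Proof.
split.
- by move=> k l _; exact: ref_speed_gt0.
- move=> k l l' tkl tkl' /negbTE nell'; case: (ltngtP l l') => [lt|gt|/val_inj eq].
  + by left; exact: ref_jobs_disjoint.
  + by right; exact: ref_jobs_disjoint.
  + by rewrite eq eqxx in nell'.
- move=> k l _; apply: le_trans (le_bigmax 0 r l) _; rewrite lerDl.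
  by rewrite mulr_ge0 ?addr_ge0 ?mulr_ge0 ?(ltW window_gt0).
- move=> k k' l /eqP red /eqP map.
  have tk'l : is_task kind k' l by rewrite /is_task map.
  have dur_le := ref_dur_le _ _ tk'l.
  rewrite /ref_start /is_map red map /=; have := ltW window_gt0; nra.
- apply: le_trans (energy_const_speed_le kind v beta (ref_speed i0 j0)) _.
  by rewrite ref_speed_energy.
Qed.

Lemma ref_objective_le (w : 'I_n -> R) : (forall l, 0 <= w l) ->
  objective w kind v ref_start ref_speed
    <= maxj w * (n%:R * maxj r + n%:R * (n%:R + 1) * ref_window).
Proof.
move=> w_ge0; rewrite /objective -sum_arith_windows mulr_sumr.
apply: ler_sum => l _; apply: ler_pM; rewrite ?bigmax_ge_id ?le_bigmax //.
apply: bigmax_le => [|k tkl]; last exact: ref_finish_le.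
have window_ge0 := ltW window_gt0.
by rewrite addr_ge0 ?bigmax_ge_id // mulr_ge0 ?addr_ge0 ?mulr_ge0.
Qed.

End ReferenceSchedule.

Theorem proposition2 (R : realType) (n m : nat) (w r : 'I_n -> R)
  (kind : 'I_m -> 'I_n -> option bool) (v : 'I_m -> 'I_n -> R)
  (beta E : R) (st s : 'I_m -> 'I_n -> R) :
  valid_instance w r kind v beta E ->
  optimal w r kind v beta E st s ->
  forall (i : 'I_m) (j : 'I_n), is_task kind i j -> 0 < v i j ->
    v i j / tmax w r kind v beta E j <= s i j /\
    s i j <= (E / v i j) `^ (1 / (beta - 1)).
Proof.
move=> [w_gt0 [r_ge0 [_ [_ [v_ge0 [beta_gt1 E_gt0]]]]]] [feas opt] i j tij vij.
have w_ge0 l : 0 <= w l by exact: ltW.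
have s_gt0 : 0 < s i j by case: feas => + _ _ _ _; apply.
split; last first.
  apply: ler_root_of_mul_powR; rewrite ?subr_gt0 ?(ltW s_gt0) //.
  by case: feas => _ _ _ _ /(le_trans _); apply; exact: task_energy_le_energy.
pose wmin := minj w (w j).
have wmin_gt0 : 0 < wmin.
  by elim/big_ind: wmin => // x y x_gt0 y_gt0; rewrite lt_min x_gt0.
have dur_gt0 : 0 < dur v s i j by rewrite divr_gt0.
have key : wmin * dur v s i j <= tmax w r kind v beta E j * wmin.
  rewrite /tmax mulrAC divfK ?gt_eqF //.
  apply: le_trans (ler_wpM2r (ltW dur_gt0) (bigmin_le _ j _)) _.
  apply: le_trans (weighted_duration_le_objective w_ge0 r_ge0 feas tij) _.
  apply: le_trans (opt _ _ (ref_feasible r beta_gt1 E_gt0 tij vij)) _.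
  exact: (ref_objective_le r E_gt0 tij vij _ w_ge0).
have tmax_gt0 : 0 < tmax w r kind v beta E j.
  by move: (lt_le_trans (mulr_gt0 wmin_gt0 dur_gt0) key); rewrite pmulr_lgt0.
by rewrite ler_pdivrMr // mulrC -ler_pdivrMr // -(ler_pM2r wmin_gt0) mulrC.
Qed.
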